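(* For $n\ge3$, the number of cyclic permutations $\pi\in\mathfrak S_n$ whose one-line notation avoids $321$ and such that every cyclic rotation of the cycle form $C(\pi)$ avoids $1342$ equals $n-1$.
   Context: A permutation $\pi\in\mathfrak S_n$ is cyclic if it consists of a single $n$-cycle. For cyclic $\pi$, $C(\pi)=(1,c_2,\dots,c_n)$ with $c_2=\pi(1)$, $c_{i+1}=\pi(c_i)$; its cyclic rotations are the sequences $c_ic_{i+1}\cdots c_nc_1\cdots c_{i-1}$ (with $c_1=1$). A sequence avoids a pattern $\sigma\in\mathfrak S_m$ if no subsequence of length $m$ is in the same relative order as $\sigma$. *)

From mathcomp Require Import all_boot all_fingroup.
Set Implicit Arguments. Unset Strict Implicit. Unset Printing Implicit Defensive.

Definition contains (w p : seq nat) : bool :=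
  [exists m : (size w).-tuple bool,
     let t := mask m w in
     (size t == size p) &&
     [forall i : 'I_(size p), forall j : 'I_(size p),
        (nth 0 t i < nth 0 t j) == (nth 0 p i < nth 0 p j)]].

Definition avoids (w p : seq nat) : bool := ~~ contains w p.

(* Permutations of 'I_n = {0,...,n-1}; we shift by one so that entries are
   in {1,...,n} as in the paper. *)
Definition one_line n (s : 'S_n) : seq nat := [seq (val (s i)).+1 | i <- enum 'I_n].

Definition cyclic_perm n (s : 'S_n) : bool := porbits s == [set [set: 'I_n]].

Definition perm_nat n (s : 'S_n) (k : nat) : nat :=
  if insub k is Some i then val (s i) else k.

(* Cycle form C(s) = (1, s(1), s(s(1)), ...), n entries, 1-based. *)
Definition cycle_form n (s : 'S_n) : seq nat :=
  [seq (iter k (perm_nat s) 0).+1 | k <- iota 0 n].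

Definition all_rotations_avoid (c p : seq nat) : bool :=
  all (fun i => avoids (rot i c) p) (iota 0 (size c)).

From mathcomp Require Import all_boot all_fingroup zify.
Set Implicit Arguments. Unset Strict Implicit. Unset Printing Implicit Defensive.

(* Work on {0, ..., n} and write x_0 = 0, x_1, ..., x_n for the cycle of a
   cyclic permutation f, with x_m = n.  If the cycle avoids 1342, every value
   x_i with 0 < i < m is smaller than every value after position m (else
   0, x_i, n, x_k is a 1342), and counting shows that x_0, ..., x_(m-1) are
   exactly 0, ..., m-1.  Hence f(x_(m-1)) = n and f(x_n) = 0, and avoiding 321
   in one-line notation forces x_(m-1) = m-1, f(m) = 0 and f increasing on
   [0, m-1) and on (m, n]; so f is the "tent" cycle
   0 -> 1 -> ... -> m-1 -> n -> n-1 -> ... -> m -> 0.  Conversely the n tents (1 <= m <= n) are 321-avoiding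
   and their cycle is cyclically unimodal, so no rotation contains 1342. *)

Lemma subseq_iota0 s N :
  subseq s (iota 0 N) = sorted ltn s && all (fun i => i < N) s.
Proof.
apply/idP/andP => [sub_s | [lt_s /allP s_lt]].
  split; first exact: (subseq_sorted ltn_trans sub_s (iota_ltn_sorted 0 N)).
  by apply/allP => i /(mem_subseq sub_s); rewrite mem_iota.
have -> : s = filter (mem s) (iota 0 N); last exact: filter_subseq.
apply: (irr_sorted_eq ltn_trans ltnn) => //.
  exact: (sorted_filter ltn_trans _ (iota_ltn_sorted 0 N)).
move=> i; rewrite mem_filter mem_iota /=.
by case s_i: (i \in s); rewrite //= s_lt.
Qed.

Lemma contains_map_iotaP (h : nat -> nat) N p :
  reflect (exists ids, [/\ subseq ids (iota 0 N), size ids = size p &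
             forall i j, i < size p -> j < size p ->
               (h (nth 0 ids i) < h (nth 0 ids j)) = (nth 0 p i < nth 0 p j)])
          (contains [seq h k | k <- iota 0 N] p).
Proof.
apply: (iffP existsP) => [[m /andP [/eqP size_m /forallP ord_m]] |
                          [ids [sub_ids size_ids ord_ids]]].
  rewrite -map_mask size_map in size_m.
  exists (mask m (iota 0 N)); split => // [|i j lt_i lt_j]; first exact: mask_subseq.
  have /forallP /(_ (Ordinal lt_j)) /eqP := ord_m (Ordinal lt_i).
  by rewrite -map_mask !(nth_map 0) ?size_m.
case/subseqP: sub_ids size_ids ord_ids => m size_m -> size_ids ord_ids.
have size_m' : size m == size [seq h k | k <- iota 0 N] by rewrite size_map size_m.
exists (Tuple size_m'); rewrite /= -map_mask size_map size_ids eqxx /=.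
apply/forallP => i; apply/forallP => j.
by rewrite !(nth_map 0) ?size_ids // ord_ids.
Qed.

Lemma contains_321P (h : nat -> nat) N :
  reflect (exists i j k, [/\ i < j < k, k < N & h k < h j < h i])
          (contains [seq h k | k <- iota 0 N] [:: 3; 2; 1]).
Proof.
apply: (iffP (contains_map_iotaP h N _)) =>
  [[ids [sub_ids size_ids ord_ids]] | [i [j [k [ijk k_lt hkji]]]]].
  case: ids size_ids ord_ids sub_ids => [|i [|j [|k [|]]]] //= _ ord_ids.
  rewrite subseq_iota0 /= => ids_ok; exists i, j, k.
  by move: (ord_ids 2 1) (ord_ids 1 0) => /= h_kj h_ji; split; lia.
exists [:: i; j; k]; split => //; first by rewrite subseq_iota0 /=; lia.
by move=> [|[|[|?]]] [|[|[|?]]] //= _ _; lia.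
Qed.

Lemma contains_1342P (h : nat -> nat) N :
  reflect (exists i j k l, [/\ i < j < k, k < l < N & h i < h l < h j /\ h j < h k])
          (contains [seq h k | k <- iota 0 N] [:: 1; 3; 4; 2]).
Proof.
apply: (iffP (contains_map_iotaP h N _)) =>
  [[ids [sub_ids size_ids ord_ids]] | [i [j [k [l [ijk kl_lt hiljk]]]]]].
  case: ids size_ids ord_ids sub_ids => [|i [|j [|k [|l [|]]]]] //= _ ord_ids.
  rewrite subseq_iota0 /= => ids_ok; exists i, j, k, l.
  move: (ord_ids 0 3) (ord_ids 3 1) (ord_ids 1 2) => /= h_il h_lj h_jk.
  by split; lia.
exists [:: i; j; k; l]; split => //; first by rewrite subseq_iota0 /=; lia.
by move=> [|[|[|[|?]]]] [|[|[|[|?]]]] //= _ _; lia.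
Qed.

Lemma rot_map_iota (h : nat -> nat) N r : r < N ->
  rot r [seq h k | k <- iota 0 N] =
  [seq h (if k + r < N then k + r else k + r - N) | k <- iota 0 N].
Proof.
move=> r_lt; rewrite -map_rot.
have -> : iota 0 N = iota 0 r ++ iota r (N - r) by rewrite -iotaD; congr iota; lia.
rewrite -{1}(size_iota 0 r) rot_size_cat.
have -> : iota 0 r ++ iota r (N - r) = iota 0 (N - r) ++ iota (N - r) r.
  by rewrite -!iotaD; congr iota; lia.
have iota_shift m d : iota m d = [seq m + k | k <- iota 0 d] by rewrite -iotaDl addn0.
rewrite (iota_shift r) (iota_shift (N - r)) !map_cat -!map_comp.
congr (_ ++ _); apply/eq_in_map => k; rewrite mem_iota /= => k_lt.
  by rewrite ifT; [congr h; lia | lia].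
by rewrite ifF; [congr h; lia | lia].
Qed.

Lemma incr_interval_eq (g : nat -> nat) lo hi L :
  (forall i j, lo <= i -> i < j -> j < hi -> g i < g j) ->
  (forall i, lo <= i < hi -> L <= g i < L + (hi - lo)) ->
  forall i, lo <= i < hi -> g i = L + (i - lo).
Proof.
move=> g_incr g_bnd.
have g_spread i j : lo <= i -> i <= j -> j < hi -> g i + (j - i) <= g j.
  move=> lo_i; elim: j => [|j IHj] i_j j_hi.
    by move: i_j; rewrite leqn0 => /eqP ->; rewrite addn0.
  case: (ltnP j i) => [j_lt_i | i_le_j].
    have i_eq : i = j.+1 by lia.
    by rewrite i_eq subnn addn0.
  by have := IHj i_le_j (ltnW j_hi); have := g_incr j j.+1; lia.
move=> i i_in; have := g_spread lo i; have := g_spread i hi.-1.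
by have := g_bnd lo; have := g_bnd hi.-1; have := g_bnd i; lia.
Qed.

Lemma interval_inj_leq (g : nat -> nat) lo hi lo' hi' :
  (forall i j, lo <= i < hi -> lo <= j < hi -> g i = g j -> i = j) ->
  (forall i, lo <= i < hi -> lo' <= g i < hi') ->
  hi - lo <= hi' - lo'.
Proof.
move=> g_inj g_bnd; rewrite -(size_iota lo (hi - lo)) -(size_iota lo' (hi' - lo')).
rewrite -(size_map g); apply: uniq_leq_size.
  rewrite map_inj_in_uniq ?iota_uniq // => i j; rewrite !mem_iota => i_in j_in.
  by apply: g_inj; lia.
by move=> y /mapP [i]; rewrite !mem_iota => i_in ->; have := g_bnd i; lia.
Qed.

Lemma interval_inj_onto (g : nat -> nat) N :
  (forall i j, i < N -> j < N -> g i = g j -> i = j) ->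
  (forall i, i < N -> g i < N) ->
  forall v, v < N -> exists2 i, i < N & g i = v.
Proof.
move=> g_inj g_lt v v_lt.
have g_uniq : uniq [seq g i | i <- iota 0 N].
  by rewrite map_inj_in_uniq ?iota_uniq // => i j; rewrite !mem_iota; apply: g_inj.
have g_sub : {subset [seq g i | i <- iota 0 N] <= iota 0 N}.
  by move=> y /mapP [i]; rewrite !mem_iota => /g_lt g_i_lt ->.
have [_ g_eq] := uniq_min_size g_uniq g_sub (eq_leq (esym (size_map _ _))).
have : v \in iota 0 N by rewrite mem_iota.
by rewrite -g_eq => /mapP [i]; rewrite mem_iota => i_lt ->; exists i.
Qed.

(* [tent_next n a] is the cyclic permutation
   0 -> 1 -> ... -> a -> n -> n-1 -> ... -> a+1 -> 0 of {0, ..., n}, and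
   [tent n a k] is the k-th entry of its cycle. *)
Definition tent_next (n a i : nat) : nat :=
  if i < a then i.+1 else if i == a then n else if i == a.+1 then 0 else i.-1.

Definition tent (n a k : nat) : nat := if k <= a then k else n + a.+1 - k.

Section Tent.
Variables n a : nat.
Hypothesis a_lt : a < n.

Lemma tent_next_lt i : i < n.+1 -> tent_next n a i < n.+1.
Proof. rewrite /tent_next; repeat case: ifP; lia. Qed.

Lemma tent_next_inj i j :
  i < n.+1 -> j < n.+1 -> tent_next n a i = tent_next n a j -> i = j.
Proof. rewrite /tent_next; repeat case: ifP; lia. Qed.

Lemma tent_lt k : k < n.+1 -> tent n a k < n.+1.
Proof. rewrite /tent; case: ifP; lia. Qed.

Lemma tentK k : k < n.+1 -> tent n a (tent n a k) = k.
Proof. rewrite /tent; repeat case: ifP; lia. Qed.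

Lemma tent_nextE k : k < n -> tent_next n a (tent n a k) = tent n a k.+1.
Proof. rewrite /tent_next /tent; repeat case: ifP; lia. Qed.

Lemma tent_next_321_free i j k : i < j < k -> k < n.+1 ->
  ~~ (tent_next n a k < tent_next n a j < tent_next n a i).
Proof. rewrite /tent_next; repeat case: ifP; lia. Qed.

Lemma tent_rot_1342_free r i j k l : r < n.+1 -> i < j < k -> k < l < n.+1 ->
  let y q := tent n a (if q + r < n.+1 then q + r else q + r - n.+1) in
  ~ (y i < y l < y j /\ y j < y k).
Proof.
move=> r_lt ijk kl y; rewrite /y.
by do 4 case: ifP => ?; rewrite /tent; repeat case: ifP; lia.
Qed.
End Tent.

(* [f] stands for a cyclic permutation of {0, ..., n} and [x] for its cycle
   form, with values in {0, ..., n} instead of {1, ..., n+1}. *)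
Section CyclicStructure.
Variables (n : nat) (f : nat -> nat).
Let x k := iter k f 0.
Hypothesis n_gt0 : 0 < n.
Hypothesis f_le : forall i, i <= n -> f i <= n.
Hypothesis f_inj : forall i j, i <= n -> j <= n -> f i = f j -> i = j.
Hypothesis x_inj : forall k1 k2, k1 <= n -> k2 <= n -> x k1 = x k2 -> k1 = k2.
Hypothesis x_period : x n.+1 = 0.
Hypothesis f_321_free : forall i j k, i < j < k -> k <= n -> ~~ (f k < f j < f i).
Hypothesis x_1342_free : forall i j k l, i < j < k -> k < l <= n ->
  ~ (x i < x l < x j /\ x j < x k).

Lemma x_le k : x k <= n.
Proof. by elim: k => [|k IHk] //=; apply: f_le. Qed.

Lemma x_onto v : v <= n -> exists2 k, k <= n & x k = v.
Proof. by apply: (interval_inj_onto (N := n.+1)) => // k _; apply: x_le. Qed.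

(* [m] is the position of the largest value [n] in the cycle; the head of the
   cycle consists of the positions, or equivalently (by [x_ltE]) the values,
   below [m]. *)
Section TopPosition.
Variable m : nat.
Hypotheses (m_le : m <= n) (x_m : x m = n).

Lemma top_pos_gt0 : 0 < m.
Proof. by case: m x_m => // x0; move: n_gt0; rewrite -x0. Qed.

Lemma x_head_lt_tail i k : 0 < i < m -> m < k <= n -> x i < x k.
Proof.
move=> i_in k_in; case: (ltngtP (x i) (x k)) => // [x_ki | x_ik].
  have := @x_1342_free 0 i m k; rewrite x_m /=.
  have := x_le i; have x_k_ne : x k != x 0 by apply/eqP => /x_inj; lia.
  have x_i_ne : x i != x m by apply/eqP => /x_inj; lia.
  rewrite x_m /= in x_i_ne x_k_ne; lia.
by have := @x_inj i k; lia.
Qed.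

(* The [n - m] values after position [m] lie strictly between [x i] and [n]. *)
Lemma x_head_lt i : i < m -> x i < m.
Proof.
case: i => [|i] i_lt //.
have x_ne_top k : k <= n -> k != m -> x k < n.
  by move=> k_le k_ne; have := x_le k; have := @x_inj k m; lia.
have tail_inj j k : m < j < n.+1 -> m < k < n.+1 -> x j = x k -> j = k.
  by move=> j_in k_in /x_inj; apply; lia.
have tail_bnd j : m < j < n.+1 -> (x i.+1).+1 <= x j < n.
  by move=> j_in; have := @x_head_lt_tail i.+1 j; have := @x_ne_top j; lia.
have := interval_inj_leq tail_inj tail_bnd; have := @x_ne_top i.+1; lia.
Qed.

Lemma x_ltE k : k <= n -> (x k < m) = (k < m).
Proof.
move=> k_le; apply/idP/idP => [x_k_lt | /x_head_lt //].
have x_inj_head j l : j < m -> l < m -> x j = x l -> j = l.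
  by move=> j_lt l_lt /x_inj; apply; lia.
have [j j_lt x_j] := interval_inj_onto x_inj_head x_head_lt x_k_lt.
by have := @x_inj j k; lia.
Qed.

Lemma f_last_head : f (x m.-1) = n.
Proof.
have x_Sm : x m.-1.+1 = f (x m.-1) by [].
by rewrite -x_Sm prednK ?top_pos_gt0.
Qed.

Lemma f_tail i : m <= i <= n -> f i = 0 \/ m <= f i.
Proof.
move=> /andP [m_i i_le]; have [k k_le x_k] := x_onto i_le.
have m_k : m <= k by rewrite leqNgt -x_ltE // x_k -leqNgt.
have x_Sk : x k.+1 = f (x k) by [].
rewrite -x_k -x_Sk; case: (ltnP k n) => [k_lt | n_le].
  by right; rewrite leqNgt x_ltE; lia.
by left; have -> : k = n by lia.
Qed.

Lemma f_head i : i < m -> i != x m.-1 -> 0 < f i < m.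
Proof.
move=> i_lt i_ne; have [k k_le x_k] := x_onto (leq_trans (ltnW i_lt) m_le).
have k_lt : k < m by rewrite -x_ltE // x_k.
have k_ne : k != m.-1 by apply: contraNneq i_ne => <-; rewrite x_k.
have x_Sk : x k.+1 = f (x k) by [].
rewrite -x_k -x_Sk x_head_lt ?andbT; last lia.
by rewrite lt0n; apply/eqP => /(@x_inj k.+1 0); lia.
Qed.

Lemma f_top_pos : f m = 0.
Proof.
have f_x_n : f (x n) = 0 := x_period.
have [<- //|x_n_ne] := eqVneq (x n) m.
have m_lt_x_n : m < x n by have := x_ltE (leqnn n); have := x_le n; lia.
have last_lt : x m.-1 < m by apply: x_head_lt; have := top_pos_gt0; lia.
have := @f_321_free (x m.-1) m (x n).
rewrite f_x_n f_last_head last_lt m_lt_x_n x_le.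
have f_m_ne0 : f m != 0.
  by rewrite -f_x_n; apply/eqP => /f_inj; have := x_le n; lia.
have f_m_ne : f m != n.
  by rewrite -f_last_head; apply/eqP => /f_inj; have := x_le m.-1; lia.
by have := f_le m_le; lia.
Qed.

Lemma last_head_eq : x m.-1 = m.-1.
Proof.
have last_lt : x m.-1 < m by apply: x_head_lt; have := top_pos_gt0; lia.
case: (ltngtP (x m.-1) m.-1) => [last_lt_pred | |//]; last lia.
have := @f_321_free (x m.-1) m.-1 m; rewrite f_top_pos f_last_head.
by have := @f_head m.-1; have := top_pos_gt0; lia.
Qed.

Lemma f_head_shift i : i < m.-1 -> f i = i.+1.
Proof.
have m_gt0 := top_pos_gt0.
have f_head' j : j < m.-1 -> 0 < f j < m.
  by move=> j_lt; apply: f_head; rewrite ?last_head_eq; lia.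
have f_incr j k : 0 <= j -> j < k -> k < m.-1 -> f j < f k.
  move=> _ j_k k_lt; have := @f_321_free j k m; rewrite f_top_pos.
  have := f_head' k k_lt; have := @f_inj j k; lia.
move=> i_lt; have := incr_interval_eq f_incr (L := 1) _ (i := i).
by rewrite subn0 => -> //; [lia | move=> j /andP [_ /f_head']; lia].
Qed.

Lemma f_tail_shift i : m < i <= n -> f i = i.-1.
Proof.
have f_pred_m : f m.-1 = n by rewrite -{1}last_head_eq f_last_head.
have f_tail_lt j : m < j <= n -> m <= f j < n.
  move=> j_in; have := @f_tail j; have := @f_le j; have := @f_inj j m.-1.
  by have := @f_inj j m; rewrite f_top_pos f_pred_m; lia.
have f_incr j k : m.+1 <= j -> j < k -> k < n.+1 -> f j < f k.
  move=> m_j j_k k_lt; have := @f_321_free m.-1 j k; rewrite f_pred_m.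
  by have := f_tail_lt j; have := @f_inj j k; lia.
move=> i_in; have := incr_interval_eq f_incr (L := m) _ (i := i).
by move=> -> //; [lia | move=> j j_in; have := f_tail_lt j; lia].
Qed.

Lemma f_eq_tent_next_at i : i <= n -> f i = tent_next n m.-1 i.
Proof.
move=> i_le; rewrite /tent_next; case: ltnP => [|i_ge]; first exact: f_head_shift.
have m_gt0 := top_pos_gt0.
case: eqVneq => [->|i_ne]; first by rewrite -{1}last_head_eq f_last_head.
case: eqVneq => [->|i_ne']; first by rewrite prednK // f_top_pos.
by apply: f_tail_shift; lia.
Qed.
End TopPosition.

Lemma f_eq_tent_next :
  exists2 a, a < n & forall i, i <= n -> f i = tent_next n a i.
Proof.
have [m m_le x_m] := x_onto (leqnn n).
exists m.-1; last exact: f_eq_tent_next_at.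
by have := top_pos_gt0 x_m; lia.
Qed.
End CyclicStructure.

Lemma perm_nat_ord n (s : 'S_n) (i : 'I_n) : perm_nat s i = s i.
Proof. by rewrite /perm_nat valK. Qed.

Lemma iter_perm_nat n (s : 'S_n) k (i : 'I_n) :
  iter k (perm_nat s) i = iter k s i.
Proof. by elim: k => //= k ->; rewrite perm_nat_ord. Qed.

Lemma one_lineE n (s : 'S_n) :
  one_line s = [seq (perm_nat s k).+1 | k <- iota 0 n].
Proof.
rewrite /one_line -val_enum_ord -map_comp.
by apply: eq_map => i /=; rewrite perm_nat_ord.
Qed.

Lemma cyclic_permE n (s : 'S_n.+1) :
  cyclic_perm s = (porbit s ord0 == [set: 'I_n.+1]).
Proof.
apply/eqP/eqP => [cyc | orbit0].
  have : porbit s ord0 \in porbits s by apply: imset_f.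
  by rewrite cyc in_set1 => /eqP.
apply/setP => A; rewrite in_set1; apply/imsetP/eqP => [[i _ ->] | ->].
  by rewrite -orbit0; apply/eqP; rewrite eq_porbit_mem orbit0 inE.
by exists ord0.
Qed.

Definition tent_perm_fun n a (i : 'I_n.+1) : 'I_n.+1 := inord (tent_next n a i).

Lemma tent_perm_fun_inj n a : a < n -> injective (@tent_perm_fun n a).
Proof.
move=> a_lt i j /(congr1 val); rewrite /= !inordK ?tent_next_lt //.
by move/(tent_next_inj a_lt (ltn_ord i) (ltn_ord j))/val_inj.
Qed.

Definition tent_perm n (a : 'I_n) : 'S_n.+1 := perm (tent_perm_fun_inj (ltn_ord a)).

Lemma perm_nat_tent n (a : 'I_n) i :
  i < n.+1 -> perm_nat (tent_perm a) i = tent_next n a i.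
Proof.
move=> i_lt; have -> : i = Ordinal i_lt by [].
by rewrite perm_nat_ord permE /= inordK ?tent_next_lt.
Qed.

Lemma iter_tent_perm n (a : 'I_n) k :
  k < n.+1 -> iter k (perm_nat (tent_perm a)) 0 = tent n a k.
Proof.
have a_lt := ltn_ord a; elim: k => [//|k IHk] k_lt /=.
by rewrite IHk ?perm_nat_tent ?tent_nextE ?tent_lt // ltnW.
Qed.

Lemma tent_perm_inj n : injective (@tent_perm n).
Proof.
move=> a b; have a_lt := ltn_ord a; have b_lt := ltn_ord b.
move=> /(congr1 (fun s => perm_nat s a)); rewrite !perm_nat_tent /tent_next; try lia.
by move=> tent_ab; apply: ord_inj; move: tent_ab; repeat case: ifP; lia.
Qed.

Lemma tent_perm_cyclic n (a : 'I_n) : cyclic_perm (tent_perm a).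
Proof.
rewrite cyclic_permE eqEsubset subsetT andTb; apply/subsetP => i _.
apply/porbitP; exists (tent n a i); apply: ord_inj.
by rewrite permX -iter_perm_nat iter_tent_perm ?tentK ?tent_lt.
Qed.

Lemma tent_perm_avoids_321 n (a : 'I_n) :
  avoids (one_line (tent_perm a)) [:: 3; 2; 1].
Proof.
rewrite /avoids one_lineE; apply/contains_321P => -[i [j [k [ijk k_lt]]]].
rewrite !perm_nat_tent; try lia.
exact/negP/tent_next_321_free.
Qed.

Lemma tent_perm_rotations_avoid_1342 n (a : 'I_n) :
  all_rotations_avoid (cycle_form (tent_perm a)) [:: 1; 3; 4; 2].
Proof.
apply/allP => r; rewrite size_map size_iota mem_iota add0n => /andP [_ r_lt].
rewrite /avoids /cycle_form rot_map_iota //.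
apply/contains_1342P => -[i [j [k [l [ijk kl pattern]]]]].
rewrite !iter_tent_perm in pattern; try by case: ifP; lia.
exact: (tent_rot_1342_free (ltn_ord a) r_lt ijk kl).
Qed.

Lemma perm_nat_lt n (s : 'S_n) i : i < n -> perm_nat s i < n.
Proof. by move=> i_lt; rewrite -[i]/(val (Ordinal i_lt)) perm_nat_ord. Qed.

Lemma perm_nat_inj n (s : 'S_n) i j :
  i < n -> j < n -> perm_nat s i = perm_nat s j -> i = j.
Proof.
move=> i_lt j_lt.
rewrite -[i]/(val (Ordinal i_lt)) -[j]/(val (Ordinal j_lt)) !perm_nat_ord.
by move/ord_inj/perm_inj => ->.
Qed.

Lemma card_porbit_cyclic n (s : 'S_n.+1) : cyclic_perm s -> #|porbit s ord0| = n.+1.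
Proof. by rewrite cyclic_permE => /eqP ->; rewrite cardsT card_ord. Qed.

Lemma iter_cyclic_inj n (s : 'S_n.+1) k1 k2 :
  cyclic_perm s -> k1 < n.+1 -> k2 < n.+1 ->
  iter k1 (perm_nat s) 0 = iter k2 (perm_nat s) 0 -> k1 = k2.
Proof.
move=> /card_porbit_cyclic card_s k1_lt k2_lt.
have := uniq_traject_porbit s ord0; rewrite card_s => s_uniq.
rewrite !(iter_perm_nat s _ ord0) -(nth_traject s k1_lt) -(nth_traject s k2_lt).
by move/ord_inj/eqP; rewrite nth_uniq ?size_traject // => /eqP.
Qed.

Lemma iter_cyclic_period n (s : 'S_n.+1) :
  cyclic_perm s -> iter n.+1 (perm_nat s) 0 = 0.
Proof.
move=> /card_porbit_cyclic card_s; have := iter_porbit s ord0.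
by rewrite card_s (iter_perm_nat s _ ord0) => ->.
Qed.

Lemma tent_perm_of_avoiding n (s : 'S_n.+1) : 0 < n -> cyclic_perm s ->
  avoids (one_line s) [:: 3; 2; 1] -> avoids (cycle_form s) [:: 1; 3; 4; 2] ->
  exists a, s = tent_perm a.
Proof.
move=> n_gt0 cyc_s /negP s_321 /negP s_1342.
have [a a_lt s_eq] :
    exists2 a, a < n & forall i, i <= n -> perm_nat s i = tent_next n a i.
  apply: f_eq_tent_next => //.
  - by move=> i; apply: (@perm_nat_lt n.+1).
  - by move=> i j; apply: (@perm_nat_inj n.+1).
  - by move=> k1 k2; apply: iter_cyclic_inj.
  - exact: iter_cyclic_period.
  - move=> i j k ijk k_le; apply/negP => pattern; apply: s_321.
    by rewrite one_lineE; apply/contains_321P; exists i, j, k.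
  - move=> i j k l ijk kl pattern; apply: s_1342.
    by apply/contains_1342P; exists i, j, k, l.
exists (Ordinal a_lt); apply/permP => i; apply: ord_inj.
by rewrite -perm_nat_ord s_eq ?leq_ord // permE /= inordK ?tent_next_lt.
Qed.

Lemma rotations_avoid_avoids c p :
  0 < size c -> all_rotations_avoid c p -> avoids c p.
Proof. by move=> c_pos /allP /(_ 0); rewrite mem_iota c_pos rot0; apply. Qed.

Theorem lemma3p4 (n : nat) (hn : 3 <= n) :
  #|[set s : 'S_n | [&& cyclic_perm s,
                        avoids (one_line s) [:: 3; 2; 1] &
                        all_rotations_avoid (cycle_form s) [:: 1; 3; 4; 2]]]|
  = n - 1.
Proof.
case: n hn => [//|n] hn; have n_gt0 : 0 < n by lia.
rewrite subn1 /= -[n in RHS]card_ord -(card_imset _ (@tent_perm_inj n)).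
apply: eq_card => s; rewrite inE.
apply/and3P/imsetP => [[cyc_s s_321 s_rot] | [a _ ->]].
  have s_1342 : avoids (cycle_form s) [:: 1; 3; 4; 2].
    by apply: rotations_avoid_avoids s_rot; rewrite size_map size_iota.
  by have [a ->] := tent_perm_of_avoiding n_gt0 cyc_s s_321 s_1342; exists a.
by split; [exact: tent_perm_cyclic | exact: tent_perm_avoids_321 |
            exact: tent_perm_rotations_avoid_1342].
Qed.
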